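(* Let $\mathbb{F}_q$ be a finite field, $n\ge1$, and let $C\le \mathbb{F}_q^n$ be a linear code which is an abelian group code. Let $G$ be a regular subgroup of $S_n$ such that $\langle G, C_{S_n}(G)\rangle \le \mathrm{PAut}(C)$, and such that $C$ is permutation equivalent to some ideal of the group algebra $\mathbb{F}_q[G]$ on which the derived subgroup $G'$ acts trivially from the left (respectively, from the right). If $G'\neq\{1\}$, then there exist positive integers $s,t>1$ with $s\cdot t=n$ such that $C$ is permutation equivalent to a linear subspace of $\bigoplus_{i=1}^{s}\mathrm{Rep}_t(\mathbb{F}_q)\le\mathbb{F}_q^{st}$.
   Context: All groups are finite. $\mathcal{B}=\{e_1,\dots,e_n\}$ is the standard basis of $\mathbb{F}_q^n$. A permutation $\sigma\in S_n$ acts on $\mathbb{F}_q^n$ by $\sigma(\sum a_ie_i)=\sum a_i e_{\sigma(i)}$; two codes $C,C'\le\mathbb{F}_q^n$ are permutation equivalent if $\sigma(C)=C'$ for some $\sigma\in S_n$; $\mathrm{PAut}(C)=\{\sigma\in S_n:\sigma(C)=C\}$. A subgroup of $S_n$ is regular if it has order $n$ and acts transitively on $\{1,\dots,n\}$; $C_{S_n}(G)$ is the centralizer of $G$ in $S_n$. For a group $H$ of order $n$, $C$ is an $H$-code if there is a bijection $\phi:\mathcal{B}\to H$ whose $\mathbb{F}_q$-linear extension $\tilde\phi:\mathbb{F}_q^n\to\mathbb{F}_q[H]$ maps $C$ onto a two-sided ideal of $\mathbb{F}_q[H]$; $C$ is an abelian group code if it is an $H$-code for some abelian $H$. $C$ is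 permutation equivalent to an ideal $I$ of $\mathbb{F}_q[G]$ if there is a bijection $\phi:\mathcal{B}\to G$ with $\tilde\phi(C)=I$. A subgroup $U\le G$ acts trivially from the left (right) on $X\subseteq\mathbb{F}_q[G]$ if $ux=x$ (resp. $xu=x$) for all $u\in U,x\in X$. $\mathrm{Rep}_t(\mathbb{F}_q)=\{(\lambda,\dots,\lambda):\lambda\in\mathbb{F}_q\}\le\mathbb{F}_q^t$ is the repetition code of length $t$. *)

From HB Require Import structures.
From mathcomp Require Import all_boot all_order all_algebra all_fingroup all_solvable.
Set Implicit Arguments. Unset Strict Implicit. Unset Printing Implicit Defensive.
Import GRing.Theory.
Local Open Scope ring_scope.


Section Codes.
Variable F : finFieldType.

(* action of sigma on F^n: sigma (sum a_i e_i) = sum a_i e_(sigma i),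
   i.e. (sigma v)_j = v_(sigma^-1 j) *)
Definition permv n (s : {perm 'I_n}) (v : 'rV[F]_n) : 'rV[F]_n :=
  \row_j v 0 ((s^-1)%g j).

Definition pimage n (s : {perm 'I_n}) (C : {vspace 'rV[F]_n}) : {set 'rV[F]_n} :=
  [set permv s v | v in C].

Definition perm_equiv n (C D : {vspace 'rV[F]_n}) : Prop :=
  exists s : {perm 'I_n}, pimage s C = [set v | v \in D].

Definition PAut n (C : {vspace 'rV[F]_n}) : {set {perm 'I_n}} :=
  [set s : {perm 'I_n} | pimage s C == [set v | v \in C]].

Definition regular n (G : {group {perm 'I_n}}) : Prop :=
  #|G| = n /\ [transitive G, on [set: 'I_n] | 'P].

Section GroupAlgebra.
Variable gT : finGroupType.
Variable H : {group gT}.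

Definition galg : {set {ffun gT -> F}} :=
  [set a : {ffun gT -> F} | [forall g, (g \notin H) ==> (a g == 0)]].

Definition galg_mul (a b : {ffun gT -> F}) : {ffun gT -> F} :=
  [ffun g => \sum_(h in H) a h * b ((h^-1 * g)%g)].

Definition galg_delta (u : gT) : {ffun gT -> F} := [ffun g => (g == u)%:R].

Definition is_ideal (I : {set {ffun gT -> F}}) : Prop :=
  [/\ I \subset galg, 0 \in I,
      {in I &, forall a b, a + b \in I} &
      forall x a, x \in galg -> a \in I ->
        galg_mul x a \in I /\ galg_mul a x \in I].

Definition left_trivial (U : {set gT}) (X : {set {ffun gT -> F}}) : Prop :=
  forall u x, u \in U -> x \in X -> galg_mul (galg_delta u) x = x.

Definition right_trivial (U : {set gT}) (X : {set {ffun gT -> F}}) : Prop :=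
  forall u x, u \in U -> x \in X -> galg_mul x (galg_delta u) = x.

(* linear extension of phi : B -> H, identifying e_i with i *)
Definition phit n (phi : 'I_n -> gT) (v : 'rV[F]_n) : {ffun gT -> F} :=
  [ffun g => \sum_(i | phi i == g) v 0 i].

Definition basis_bij n (phi : 'I_n -> gT) : Prop :=
  injective phi /\ phi @: [set: 'I_n] = H.

Definition perm_equiv_ideal n (C : {vspace 'rV[F]_n}) (I : {set {ffun gT -> F}}) :=
  exists phi : 'I_n -> gT, basis_bij phi /\ [set phit phi v | v in C] = I.

Definition group_code n (C : {vspace 'rV[F]_n}) : Prop :=
  #|H| = n /\ exists I, is_ideal I /\ perm_equiv_ideal C I.

End GroupAlgebra.

Definition abelian_group_code n (C : {vspace 'rV[F]_n}) : Prop :=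
  exists (gT : finGroupType) (H : {group gT}), abelian H /\ group_code H C.

(* the code Rep_t + ... + Rep_t (s copies) in F^(s t): coordinate j lies in
   block j %/ t, and vectors are constant on blocks *)
Definition in_rep_sum n (t : nat) (v : 'rV[F]_n) : Prop :=
  forall j k : 'I_n, (j %/ t = k %/ t)%N -> v 0 j = v 0 k.

End Codes.

From HB Require Import structures.
From mathcomp Require Import all_boot all_order all_algebra all_fingroup all_solvable.
Set Implicit Arguments. Unset Strict Implicit. Unset Printing Implicit Defensive.
Import GRing.Theory.

(* Pick a <> 1 in G' and let K = <[a]>.  Since K acts trivially on I from the
   left (right), every codeword, read through the basis bijection, is constant
   on the right (left) cosets of K.  These cosets cut the coordinates into
   #|G : K| blocks of size #|K| > 1, and #|G : K| > 1 since G = K would make G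
   cyclic, hence abelian.  Renumbering the coordinates so that every block is a
   run of consecutive indices gives the required code.  A cyclic subgroup is
   used instead of G' itself because G' = G is not excluded. *)

Lemma reshape_index_nseq s t i :
  (i < s * t)%N -> reshape_index (nseq s t) i = i %/ t.
Proof.
move=> lt_i_st; have t_gt0 : (0 < t)%N by case: t lt_i_st => //; rewrite muln0.
have lt_is : (i %/ t < s)%N by rewrite ltn_divLR.
have def_i : flatten_index (nseq s t) (i %/ t) (i %% t) = i.
  by rewrite /flatten_index (take_nseq _ (ltnW lt_is)) sumn_nseq mulnC -divn_eq.
by rewrite -{1}def_i flatten_indexKl // nth_nseq lt_is ltn_mod.
Qed.

Lemma mem_nth_flatten (T : eqType) (x0 : T) (ss : seq (seq T)) i :
  (i < size (flatten ss))%N ->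
  nth x0 (flatten ss) i \in nth [::] ss (reshape_index (shape ss) i).
Proof.
rewrite size_flatten => lt_i_ss; rewrite nth_flatten mem_nth // -nth_shape.
exact: reshape_offsetP.
Qed.

Lemma uniq_flatten_fibres (I : finType) (T : eqType) (f : I -> T) (s : seq T) :
  uniq s -> uniq (flatten [seq enum [pred i | f i == b] | b <- s]).
Proof.
elim: s => //= b s IHs /andP[b_notin_s /IHs uniq_s].
rewrite cat_uniq enum_uniq uniq_s andbT; apply/hasPn => i.
case/flatten_mapP => b' b's; rewrite !mem_enum /= => /eqP fi_b'.
by apply: contra b_notin_s => /eqP <-; rewrite fi_b'.
Qed.

Lemma fibres_contiguous (T : eqType) n t (f : 'I_n -> T) :
  (forall i, #|[pred j | f j == f i]| = t) ->
  exists p : 'S_n, forall j k : 'I_n, j %/ t = k %/ t -> f (p j) = f (p k).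
Proof.
move=> card_fibre.
pose labels := undup (map f (enum 'I_n)).
pose blocks := [seq enum [pred i | f i == b] | b <- labels].
have shape_blocks : shape blocks = nseq (size labels) t.
  have <- : size (shape blocks) = size labels by rewrite !size_map.
  apply/all_pred1P/allP => _ /mapP[_ /mapP[b label_b ->] ->] /=.
  move: label_b; rewrite mem_undup => /mapP[i _ ->].
  by rewrite -cardE card_fibre.
(* In [flatten blocks], fibre number r occupies the positions r * t, ..., r * t + t - 1. *)
have /tuple_permP[p def_blocks] : perm_eq (flatten blocks) (ord_tuple n).
  apply: uniq_perm; first exact/uniq_flatten_fibres/undup_uniq.
    by rewrite val_ord_tuple enum_uniq.
  move=> i; rewrite val_ord_tuple mem_enum; apply/flatten_mapP.
  by exists (f i); rewrite ?mem_undup ?map_f ?mem_enum ?inE.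
have size_blocks : size (flatten blocks) = (size labels * t)%N.
  by rewrite size_flatten shape_blocks sumn_nseq mulnC.
have lt_j_blocks (j : 'I_n) : (j < size (flatten blocks))%N.
  by rewrite def_blocks size_tuple.
have lt_jt_labels (j : 'I_n) : (j %/ t < size labels)%N.
  have t_gt0 : (0 < t)%N.
    by rewrite -(card_fibre j); apply/card_gt0P; exists j; rewrite inE /=.
  by rewrite ltn_divLR // -size_blocks.
have label_p j : f (p j) = nth (f j) labels (j %/ t).
  have := mem_nth_flatten j (lt_j_blocks j).
  rewrite shape_blocks reshape_index_nseq -?size_blocks //.
  have -> : nth j (flatten blocks) j = p j.
    by rewrite def_blocks /= (nth_map j) ?size_enum_ord // nth_ord_enum tnth_ord_tuple.
  by rewrite (nth_map (f j)) // mem_enum => /eqP.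
exists p => j k eq_jk; rewrite !label_p eq_jk; exact: set_nth_default.
Qed.

Section RepetitionBlocks.
Local Open Scope ring_scope.
Variables (F : finFieldType) (n : nat).

Lemma permvE (s : {perm 'I_n}) (v : 'rV[F]_n) : permv s v = v *m perm_mx s.
Proof. by rewrite -[s in perm_mx s]invgK -col_permE; apply/rowP => j; rewrite !mxE. Qed.

Lemma perm_equiv_rep_sum (C : {vspace 'rV[F]_n}) (T : eqType) (f : 'I_n -> T) t :
  (forall i, #|[pred j | f j == f i]| = t) ->
  (forall v i j, v \in C -> f i = f j -> v 0 i = v 0 j) ->
  exists D : {vspace 'rV[F]_n}, (forall v, v \in D -> in_rep_sum t v) /\ perm_equiv C D.
Proof.
move=> /fibres_contiguous[p fp_blocks] constC; pose s := (p^-1)%g.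
exists (linfun (mulmxr (perm_mx s)) @: C)%VS; split.
  move=> _ /memv_imgP[v vC ->] j k eq_jk.
  by rewrite lfunE /= -permvE !mxE invgK (constC v _ _ vC (fp_blocks j k eq_jk)).
exists s; apply/setP => w; rewrite inE.
by apply/imsetP/memv_imgP => -[v vC ->]; exists v; rewrite // lfunE /= permvE.
Qed.

End RepetitionBlocks.

Lemma indexg_cycle_gt1 (gT : finGroupType) (G : {group gT}) (a : gT) :
  ~~ abelian G -> (1 < #|G : <[a]>|%g)%N.
Proof.
apply: contraR; rewrite -ltnNge ltnS => le_idx_1.
have /eqP : #|G : <[a]>|%g = 1%N by apply/anti_leq; rewrite le_idx_1 indexg_gt0.
by rewrite indexg_eq1 => /abelianS; apply; apply: cycle_abelian.
Qed.

Section GroupAlgebraCodes.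
Local Open Scope ring_scope.
Local Open Scope group_scope.
Variables (F : finFieldType) (gT : finGroupType) (H : {group gT}).

Lemma galg_delta_mulE u (x : {ffun gT -> F}) g :
  u \in H -> galg_mul H (galg_delta F u) x g = x (u^-1 * g).
Proof.
move=> Hu; rewrite ffunE (bigD1 u) //= ffunE eqxx mul1r big1 ?addr0 // => h /andP[_ neq_hu].
by rewrite ffunE (negbTE neq_hu) mul0r.
Qed.

Lemma galg_mul_deltaE u (x : {ffun gT -> F}) g :
  u \in H -> g \in H -> galg_mul H x (galg_delta F u) g = x (g * u^-1).
Proof.
move=> Hu Hg; rewrite ffunE (bigD1 (g * u^-1)) ?groupM ?groupV //= ffunE.
rewrite invMg invgK -mulgA mulVg mulg1 eqxx mulr1 big1 ?addr0 // => h /andP[_ neq_h].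
rewrite ffunE; case: eqP => [def_u | _]; last by rewrite mulr0.
by case/eqP: neq_h; rewrite -def_u invMg invgK mulgA mulgV mul1g.
Qed.

Variables (n : nat) (phi : 'I_n -> gT).
Hypothesis phi_bij : basis_bij H phi.

Lemma phitE (v : 'rV[F]_n) i : phit phi v (phi i) = v 0 i.
Proof.
by rewrite ffunE (big_pred1 i) // => j; rewrite /= (inj_eq phi_bij.1).
Qed.

Lemma phi_in i : phi i \in H.
Proof. by rewrite -phi_bij.2 imset_f ?inE. Qed.

Lemma card_preim_basis (A : {set gT}) :
  A \subset H -> #|[pred j | phi j \in A]| = #|A|.
Proof.
move=> sAH; rewrite (card_preim phi_bij.1); apply: eq_card => g; rewrite !inE.
case Ag: (g \in A); rewrite ?andbF // andbT.
by move/subsetP/(_ g Ag): sAH; rewrite -phi_bij.2 => /imsetP[i _ ->]; apply: codom_f.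
Qed.

Lemma card_fibre_rcoset (K : {group gT}) i :
  K \subset H -> #|[pred j | K :* phi j == K :* phi i]| = #|K|.
Proof.
move=> sKH; rewrite -(card_rcoset K (phi i)) -card_preim_basis; last first.
  by rewrite -sub_rcosetV rcoset_id ?groupV ?phi_in.
by apply: eq_card => j; rewrite !inE; apply/eqP/rcoset_eqP.
Qed.

Lemma card_fibre_lcoset (K : {group gT}) i :
  K \subset H -> #|[pred j | phi j *: K == phi i *: K]| = #|K|.
Proof.
move=> sKH; rewrite -(card_lcoset K (phi i)) -card_preim_basis; last first.
  by rewrite -sub_lcosetV lcoset_id ?groupV ?phi_in.
by apply: eq_card => j; rewrite !inE; apply/eqP/lcoset_eqP.
Qed.

Lemma code_constant_rcoset (C : {vspace 'rV[F]_n}) I (K : {group gT}) :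
  [set phit phi v | v in C] = I -> K \subset H -> left_trivial H K I ->
  forall v i j, v \in C -> K :* phi i = K :* phi j -> v 0 i = v 0 j.
Proof.
move=> defI sKH trivK v i j vC /rcoset_eqP/rcosetP[k Kk def_i].
have vI : phit phi v \in I by rewrite -defI imset_f.
rewrite -!phitE def_i -{2}(trivK k^-1 _ (groupVr Kk) vI).
by rewrite galg_delta_mulE ?invgK // (subsetP sKH) ?groupV.
Qed.

Lemma code_constant_lcoset (C : {vspace 'rV[F]_n}) I (K : {group gT}) :
  [set phit phi v | v in C] = I -> K \subset H -> right_trivial H K I ->
  forall v i j, v \in C -> phi i *: K = phi j *: K -> v 0 i = v 0 j.
Proof.
move=> defI sKH trivK v i j vC /lcoset_eqP/lcosetP[k Kk def_i].
have vI : phit phi v \in I by rewrite -defI imset_f.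
rewrite -!phitE def_i -{2}(trivK k^-1 _ (groupVr Kk) vI).
by rewrite galg_mul_deltaE ?invgK ?groupM ?phi_in // (subsetP sKH) ?groupV.
Qed.

End GroupAlgebraCodes.

Theorem corollary2 (F : finFieldType) (n : nat) (C : {vspace 'rV[F]_n})
  (G : {group {perm 'I_n}}) :
  (1 <= n)%N ->
  abelian_group_code C ->
  regular G ->
  (<<G :|: 'C(G)>> \subset PAut C)%g ->
  (exists I : {set {ffun {perm 'I_n} -> F}},
     [/\ is_ideal G I, perm_equiv_ideal G C I &
         left_trivial G ((G^`(1))%g) I \/ right_trivial G ((G^`(1))%g) I]) ->
  (G^`(1) != 1)%g ->
  exists s t : nat, [/\ (1 < s)%N, (1 < t)%N, (s * t)%N = n &
    exists D : {vspace 'rV[F]_n},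
      (forall v, v \in D -> in_rep_sum t v) /\ perm_equiv C D].
Proof.
move=> _ _ [cardG _] _ [I [_ [phi [phi_bij defI]] triv]] G'_neq1.
have [a G'a a_neq1] := trivgPn _ G'_neq1.
have sAG' : (<[a]> \subset G^`(1))%g by rewrite cycle_subG.
have sAG : (<[a]> \subset G)%g := subset_trans sAG' (der_sub 1 G).
exists #|G : <[a]>|%g, #[a]%g; split.
- by apply: indexg_cycle_gt1; rewrite (sameP derG1P eqP).
- by rewrite order_gt1.
- by rewrite mulnC Lagrange.
case: triv => [trivL | trivR].
- apply: (perm_equiv_rep_sum (f := fun j => <[a]> :* phi j)%g).
    by move=> i; apply: (card_fibre_rcoset phi_bij i sAG).
  apply: (code_constant_rcoset phi_bij defI sAG) => u x /(subsetP sAG'); apply: trivL.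
- apply: (perm_equiv_rep_sum (f := fun j => phi j *: <[a]>)%g).
    by move=> i; apply: (card_fibre_lcoset phi_bij i sAG).
  apply: (code_constant_lcoset phi_bij defI sAG) => u x /(subsetP sAG'); apply: trivR.
Qed.
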